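(* For $|q|<1$ and nonzero $z$ with $zq^n\neq1\neq z^{-1}q^n$ for $n\ge1$, \[ \frac{1}{(q;q)_\infty}\left(1+\sum_{n=1}^\infty\frac{(1-z)(1-z^{-1})(-1)^nq^{n(3n-1)/2}(1+q^{3n})}{(1-zq^n)(1-z^{-1}q^n)}\right)=(z+z^{-1}-1)R(z,q)+(1-z)(1-z^{-1}), \] where \[ R(z,q)=\frac{1}{(q;q)_\infty}\left(1+\sum_{n=1}^\infty\frac{(1-z)(1-z^{-1})(-1)^nq^{n(3n+1)/2}(1+q^n)}{(1-zq^n)(1-z^{-1}q^n)}\right). \]
   Context: Notation: $(q;q)_\infty=\prod_{j\ge1}(1-q^j)$. *)

From Stdlib Require Import Reals.
From Coquelicot Require Import Coquelicot.
Open Scope C_scope.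

Fixpoint qpoch_partial (q : C) (N : nat) : C :=
  match N with
  | O => 1
  | S k => qpoch_partial q k * (1 - q ^ (S k))
  end.

Definition is_qpoch_inf (q P : C) : Prop :=
  filterlim (qpoch_partial q) eventually (locally P).

Definition lhs_term (z q : C) (n : nat) : C :=
  (1 - z) * (1 - / z) * (- 1) ^ n * q ^ ((n * (3 * n - 1)) / 2)%nat
  * (1 + q ^ (3 * n)) / ((1 - z * q ^ n) * (1 - / z * q ^ n)).

Definition R_term (z q : C) (n : nat) : C :=
  (1 - z) * (1 - / z) * (- 1) ^ n * q ^ ((n * (3 * n + 1)) / 2)%nat
  * (1 + q ^ n) / ((1 - z * q ^ n) * (1 - / z * q ^ n)).

From Stdlib Require Import Reals Lia Lra.
From Coquelicot Require Import Coquelicot.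
Open Scope C_scope.

(* Writing w = (1 - z)(1 - 1/z), so that 1 - w = z + 1/z - 1, every summand of the left-hand
   series equals (1 - w) times the corresponding summand of R plus w times the n-th pair
   (-1)^n q^(n(3n-1)/2) (1 + q^n) of Euler's pentagonal series; the identity thus reduces to the
   pentagonal number theorem (q;q)_oo = 1 + sum_(n>=1) (-1)^n q^(n(3n-1)/2) (1 + q^n).
   That theorem follows from Shanks' finite identity
     sum_(k=0..n) (-1)^k (q^(k+1);q)_(n-k) q^(nk + k(k+1)/2) = 1 + sum_(j=1..n) (pentagonal pair j),
   which is proved by telescoping in n.  Its terms with k >= 1 are O(|q|^n), so its k = 0 term
   (q;q)_n converges to the pentagonal series.  The limit is nonzero because
   |prod_(j>M) (1 - q^j)| >= 1 - sum_(j>M) |q|^j >= 1/2 for M large. *)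

Lemma Cpow_split (q : C) a b c : (a = b + c)%nat -> q ^ a = q ^ b * q ^ c.
Proof. intros ->. apply Cpow_add_r. Qed.

Lemma pow_le_1 (r : R) n : (0 <= r <= 1)%R -> (0 <= r ^ n <= 1)%R.
Proof. intros Hr. induction n; simpl; nra. Qed.

Lemma pow_antitone (r : R) m n : (0 <= r <= 1)%R -> (m <= n)%nat -> (r ^ n <= r ^ m)%R.
Proof.
  intros Hr Hmn. replace n with (m + (n - m))%nat by lia. rewrite pow_add.
  pose proof (pow_le_1 r m Hr). pose proof (pow_le_1 r (n - m) Hr). nra.
Qed.

Lemma exp_le_mono (x y : R) : (x <= y)%R -> (exp x <= exp y)%R.
Proof. intros [Hlt|Heq]; [apply Rlt_le, exp_increasing, Hlt | rewrite Heq; apply Rle_refl]. Qed.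

Lemma Cmod_m1_pow n : Cmod ((- 1) ^ n) = 1%R.
Proof.
  rewrite Cmod_pow, Cmod_R. replace (Rabs (-1)) with 1%R by (rewrite Rabs_left; lra). apply pow1.
Qed.

Lemma Cmod_1_minus_ge (x : C) : (1 - Cmod x <= Cmod (1 - x))%R.
Proof.
  pose proof (Cmod_triangle (1 - x) x) as H.
  replace (1 - x + x) with (RtoC 1) in H by ring. rewrite Cmod_1 in H. lra.
Qed.

Lemma Cmod_1_plus_pow_le (q : C) n : (Cmod q <= 1)%R -> (Cmod (1 + q ^ n) <= 2)%R.
Proof.
  intros Hq. eapply Rle_trans; [apply Cmod_triangle|].
  rewrite Cmod_1, Cmod_pow. pose proof (pow_le_1 _ n (conj (Cmod_ge_0 q) Hq)). lra.
Qed.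

Fixpoint sumC (a : nat -> C) (n : nat) : C :=
  match n with O => 0 | S m => sumC a m + a m end.

Lemma sumC_ext a b n : (forall k, (k < n)%nat -> a k = b k) -> sumC a n = sumC b n.
Proof.
  induction n as [|n IH]; intros Hab; simpl; auto.
  rewrite IH, Hab by (auto; intros; apply Hab; lia). reflexivity.
Qed.

Lemma sumC_telescope a (g : nat -> C) n :
  sumC (fun k => a k - g k + g (S k)) n = sumC a n - g O + g n.
Proof. induction n as [|n IH]; simpl; [|rewrite IH]; ring. Qed.

Lemma sumC_S_l (a : nat -> C) n : sumC a (S n) = a O + sumC (fun k => a (S k)) n.
Proof.
  induction n as [|n IH]; [simpl; ring|].
  change (sumC a (S (S n))) with (sumC a (S n) + a (S n)). rewrite IH. simpl. ring.
Qed.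

Lemma sum_n_sumC (a : nat -> C) m : sum_n a m = sumC a (S m).
Proof.
  induction m as [|m IH]; [rewrite sum_O; simpl; ring|].
  rewrite sum_Sn, IH. reflexivity.
Qed.

Lemma sumC_geom_bound (a : nat -> C) (c r : R) n :
  (0 <= c)%R -> (0 <= r < 1)%R -> (forall k, (Cmod (a k) <= c * r ^ k)%R) ->
  (Cmod (sumC a n) <= c / (1 - r))%R.
Proof.
  intros Hc Hr Ha.
  assert (Hgeom : (Cmod (sumC a n) <= c * (1 - r ^ n) / (1 - r))%R).
  { induction n as [|n IH]; simpl.
    - rewrite Cmod_0. apply Req_le. field. lra.
    - eapply Rle_trans; [apply Cmod_triangle|].
      replace (c * (1 - r * r ^ n) / (1 - r))%R with (c * (1 - r ^ n) / (1 - r) + c * r ^ n)%R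
        by (field; lra).
      specialize (Ha n). lra. }
  eapply Rle_trans; [exact Hgeom|]. unfold Rdiv. apply Rmult_le_compat_r.
  - apply Rlt_le, Rinv_0_lt_compat. lra.
  - pose proof (pow_le_1 r n ltac:(lra)). nra.
Qed.

(** * Shanks' finite form of the pentagonal number theorem *)

(* [qprod q k n] is (q^(k+1); q)_(n-k) = ∏_(k<j<=n) (1 - q^j), equal to 1 when n <= k. *)
Fixpoint qprod (q : C) (k n : nat) : C :=
  match n with
  | O => 1
  | S m => if (k <=? m)%nat then qprod q k m * (1 - q ^ S m) else 1
  end.

Lemma qprod_S q k m : (k <= m)%nat -> qprod q k (S m) = qprod q k m * (1 - q ^ S m).
Proof. intros Hkm. simpl. apply Nat.leb_le in Hkm. rewrite Hkm. reflexivity. Qed.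

Lemma qprod_empty q k n : (n <= k)%nat -> qprod q k n = 1.
Proof. destruct n as [|m]; simpl; auto. intros H. destruct (Nat.leb_spec k m); auto; lia. Qed.

Lemma qprod_cons q k m : (S k <= m)%nat -> qprod q k m = (1 - q ^ S k) * qprod q (S k) m.
Proof.
  induction m as [|m IH]; intros Hkm; [lia|].
  destruct (Nat.eq_dec k m) as [->|Hne].
  - rewrite qprod_S, !qprod_empty by lia. ring.
  - rewrite !qprod_S, IH by lia. ring.
Qed.

Lemma qpoch_partial_split q k n :
  (k <= n)%nat -> qpoch_partial q n = qpoch_partial q k * qprod q k n.
Proof.
  induction n as [|n IH]; intros Hkn.
  - replace k with O by lia. simpl. ring.
  - destruct (Nat.eq_dec k (S n)) as [->|Hne].
    + rewrite qprod_empty by lia. ring.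
    + rewrite qprod_S by lia. simpl. rewrite IH by lia. ring.
Qed.

Fixpoint triangular (k : nat) : nat :=
  match k with O => O | S j => (triangular j + S j)%nat end.

Lemma triangular_double k : (2 * triangular k = k * (k + 1))%nat.
Proof. induction k; simpl; nia. Qed.

Definition shanks_term (q : C) (n k : nat) : C :=
  (- 1) ^ k * qprod q k n * q ^ (n * k + triangular k).

Definition pentagonal_pair (q : C) (n : nat) : C :=
  (- 1) ^ n * q ^ ((n * (3 * n - 1)) / 2)%nat * (1 + q ^ n).

Lemma pentagonal_exponent_S m :
  ((S m * (3 * S m - 1)) / 2 = m * m + triangular m + S m + m)%nat.
Proof.
  replace (S m * (3 * S m - 1))%nat with ((m * m + triangular m + S m + m) * 2)%nat
    by (pose proof (triangular_double m); nia).
  apply Nat.div_mul. lia.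
Qed.

Definition shanks_defect (q : C) (m k : nat) : C :=
  match k with O => 0 | S j => - q ^ (S m + j) * shanks_term q m j end.

Lemma shanks_term_S q m k : (k <= m)%nat ->
  shanks_term q (S m) k = shanks_term q m k - shanks_defect q m k + shanks_defect q m (S k).
Proof.
  intros Hkm. unfold shanks_defect, shanks_term. rewrite qprod_S by lia. destruct k as [|j].
  - rewrite (Cpow_split q (S m * 0 + triangular 0) (m * 0 + triangular 0) 0) by (simpl; lia).
    rewrite (Cpow_split q (S m + 0) (S m) 0) by lia. simpl. ring.
  - rewrite (qprod_cons q j m) by lia.
    rewrite (Cpow_split q (S m * S j + triangular (S j)) (m * j + triangular j) (m + j + j + 2))
      by (simpl; nia).
    rewrite (Cpow_split q (m * S j + triangular (S j)) (m * j + triangular j) (m + j + 1))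
      by (simpl; nia).
    rewrite (Cpow_split q (m + j + j + 2) (m + j + 1) (S j)) by lia.
    rewrite (Cpow_split q (S m + S j) (m + j + 1) 1) by lia.
    rewrite (Cpow_split q (S m + j) (m + j + 1) 0) by lia.
    rewrite (Cpow_split q (m + j + 1) m (S j)) by lia.
    rewrite (Cpow_S q j), (Cpow_S q m), (Cpow_S (-1) j). simpl Cpow. ring.
Qed.

Lemma shanks_sum_S q m :
  sumC (shanks_term q (S m)) (S (S m)) = sumC (shanks_term q m) (S m) + pentagonal_pair q (S m).
Proof.
  change (sumC (shanks_term q (S m)) (S (S m)))
    with (sumC (shanks_term q (S m)) (S m) + shanks_term q (S m) (S m)).
  rewrite (sumC_ext _ (fun k => shanks_term q m k - shanks_defect q m k + shanks_defect q m (S k)))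
    by (intros; apply shanks_term_S; lia).
  rewrite sumC_telescope. unfold shanks_defect, shanks_term, pentagonal_pair.
  rewrite pentagonal_exponent_S, !qprod_empty by lia.
  rewrite (Cpow_split q (S m * S m + triangular (S m)) (m * m + triangular m) (S m + m + S m))
    by (simpl; nia).
  rewrite (Cpow_split q (m * m + triangular m + S m + m) (m * m + triangular m) (S m + m)) by lia.
  rewrite (Cpow_split q (S m + m + S m) (S m + m) (S m)) by lia.
  rewrite (Cpow_S (-1) m). ring.
Qed.

Lemma shanks_identity q n :
  sumC (shanks_term q n) (S n) = 1 + sumC (fun j => pentagonal_pair q (S j)) n.
Proof.
  induction n as [|n IH].
  - unfold shanks_term. simpl. ring.
  - rewrite shanks_sum_S, IH. simpl. ring.
Qed.

Lemma qpoch_partial_shanks q n :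
  qpoch_partial q n =
    1 + sumC (fun j => pentagonal_pair q (S j)) n - sumC (fun k => shanks_term q n (S k)) n.
Proof.
  rewrite <- shanks_identity, sumC_S_l.
  rewrite (qpoch_partial_split q 0 n) by lia. unfold shanks_term at 1.
  rewrite Nat.mul_0_r. simpl. ring.
Qed.

(** * Estimates for [|q| < 1] *)

Section Estimates.

Variable q : C.
Hypothesis Hq : (Cmod q < 1)%R.

Let r := Cmod q.

Lemma Cmod_range : (0 <= r < 1)%R.
Proof. split; [apply Cmod_ge_0 | exact Hq]. Qed.

Lemma one_minus_pow_neq0 n : (1 <= n)%nat -> 1 - q ^ n <> 0.
Proof.
  intros Hn H0. apply Ceq_minus in H0.
  pose proof (pow_lt_1_compat r n Cmod_range Hn) as Hlt.
  unfold r in Hlt. rewrite <- Cmod_pow, <- H0, Cmod_1 in Hlt. lra.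
Qed.

Lemma qpoch_partial_neq0 n : qpoch_partial q n <> 0.
Proof.
  induction n as [|n IH]; simpl.
  - apply C1_nz.
  - apply Cmult_neq_0; [exact IH | apply (one_minus_pow_neq0 (S n)); lia].
Qed.

Lemma Cmod_qprod_le k n : (Cmod (qprod q k n) <= exp (/ (1 - r)))%R.
Proof.
  pose proof Cmod_range as Hr.
  assert (Hexp : (Cmod (qprod q k n) <= exp ((r - r ^ S n) / (1 - r)))%R).
  { induction n as [|n IH]; simpl qprod.
    - rewrite Cmod_1. replace ((r - r ^ 1) / (1 - r))%R with 0%R by (field; lra).
      rewrite exp_0. lra.
    - destruct (k <=? n)%nat.
      + rewrite Cmod_mult.
        replace ((r - r ^ S (S n)) / (1 - r))%R with ((r - r ^ S n) / (1 - r) + r ^ S n)%R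
          by (simpl; field; lra).
        rewrite exp_plus. apply Rmult_le_compat; auto using Cmod_ge_0.
        eapply Rle_trans; [apply Cmod_triangle|].
        rewrite Cmod_opp, Cmod_1, <- Cpow_S, Cmod_pow. apply exp_ineq1_le.
      + rewrite Cmod_1. pose proof (exp_ineq1_le ((r - r ^ S (S n)) / (1 - r))).
        assert (0 <= (r - r ^ S (S n)) / (1 - r))%R.
        { apply Rdiv_le_0_compat; [|lra].
          pose proof (pow_antitone r 1 (S (S n)) ltac:(lra) ltac:(lia)). simpl in *. lra. }
        lra. }
  eapply Rle_trans; [exact Hexp|]. apply exp_le_mono.
  rewrite <- (Rmult_1_l (/ (1 - r))).
  apply Rmult_le_compat_r; [apply Rlt_le, Rinv_0_lt_compat; lra|].
  pose proof (pow_le_1 r (S n) ltac:(lra)). lra.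
Qed.

(* |∏ (1 - a_j)| >= 1 - Σ |a_j|, with the geometric sum Σ_(k<j<=n) r^j in closed form. *)
Lemma Cmod_qprod_ge k n : (k <= n)%nat -> (1 - r ^ S k / (1 - r) <= Cmod (qprod q k n))%R.
Proof.
  pose proof Cmod_range as Hr. intros Hkn.
  enough (Hgeom : (1 - (r ^ S k - r ^ S n) / (1 - r) <= Cmod (qprod q k n))%R).
  { eapply Rle_trans; [|exact Hgeom]. unfold Rdiv.
    pose proof (pow_le_1 r (S n) ltac:(lra)).
    pose proof (Rinv_0_lt_compat (1 - r) ltac:(lra)). nra. }
  induction n as [|n IH].
  - replace k with O by lia. simpl. rewrite Cmod_1, Rminus_diag.
    unfold Rdiv. rewrite Rmult_0_l. lra.
  - destruct (Nat.eq_dec k (S n)) as [->|Hne].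
    + rewrite qprod_empty, Cmod_1, Rminus_diag by lia.
      unfold Rdiv. rewrite Rmult_0_l. lra.
    + rewrite qprod_S, Cmod_mult by lia.
      specialize (IH ltac:(lia)).
      pose proof (Cmod_1_minus_ge (q ^ S n)) as Hfac. rewrite Cmod_pow in Hfac. fold r in Hfac.
      set (L := (1 - (r ^ S k - r ^ S n) / (1 - r))%R) in *.
      assert (HL : (L <= 1)%R).
      { assert (0 <= (r ^ S k - r ^ S n) / (1 - r))%R.
        { apply Rdiv_le_0_compat; [|lra].
          pose proof (pow_antitone r (S k) (S n) ltac:(lra) ltac:(lia)). lra. }
        unfold L. lra. }
      replace (1 - (r ^ S k - r ^ S (S n)) / (1 - r))%R with (L - r ^ S n)%R
        by (unfold L; simpl; field; lra).
      pose proof (pow_le_1 r (S n) ltac:(lra)).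
      pose proof (Cmod_ge_0 (qprod q k n)). pose proof (Cmod_ge_0 (1 - q ^ S n)).
      destruct (Rle_or_lt 0 L).
      * apply Rle_trans with (L * (1 - r ^ S n))%R; [nra|].
        apply Rmult_le_compat; lra.
      * nra.
Qed.

Lemma Cmod_shanks_tail_le n :
  (Cmod (sumC (fun k => shanks_term q n (S k)) n) <= exp (/ (1 - r)) / (1 - r) * r ^ n)%R.
Proof.
  pose proof Cmod_range as Hr.
  replace (exp (/ (1 - r)) / (1 - r) * r ^ n)%R with (exp (/ (1 - r)) * r ^ n / (1 - r))%R
    by (field; lra).
  apply sumC_geom_bound; [pose proof (exp_pos (/ (1 - r))); pose proof (pow_le_1 r n); nra | lra |].
  intros k. unfold shanks_term. rewrite !Cmod_mult, Cmod_m1_pow, !Cmod_pow. fold r.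
  pose proof (Cmod_qprod_le (S k) n).
  assert (r ^ (n * S k + triangular (S k)) <= r ^ n * r ^ k)%R.
  { rewrite <- pow_add. apply pow_antitone; [lra | simpl; nia]. }
  pose proof (pow_le_1 r (n * S k + triangular (S k)) ltac:(lra)).
  pose proof (Cmod_ge_0 (qprod q (S k) n)). nra.
Qed.

Lemma shanks_tail_cvg_0 :
  filterlim (fun n => sumC (fun k => shanks_term q n (S k)) n) eventually (locally (0 : C)).
Proof.
  pose proof Cmod_range as Hr.
  apply (filterlim_norm_zero (V := C_NormedModule)).
  enough (Hlim : is_lim_seq (fun n => Cmod (sumC (fun k => shanks_term q n (S k)) n)) 0)
    by exact Hlim.
  apply (is_lim_seq_le_le (fun _ => 0%R) _ (fun n => exp (/ (1 - r)) / (1 - r) * r ^ n)%R).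
  - intros n. split; [apply Cmod_ge_0 | apply Cmod_shanks_tail_le].
  - apply is_lim_seq_const.
  - replace (Finite 0) with (Rbar_mult (exp (/ (1 - r)) / (1 - r))%R 0)
      by (simpl; f_equal; ring).
    apply is_lim_seq_scal_l, is_lim_seq_geom. rewrite Rabs_pos_eq; lra.
Qed.

End Estimates.

(** * Euler's pentagonal number theorem *)

Lemma filterlim_S_iff {T : Type} (u : nat -> T) (F : (T -> Prop) -> Prop) :
  filterlim (fun n => u (S n)) eventually F <-> filterlim u eventually F.
Proof.
  split; intros Hu P HP; destruct (Hu P HP) as [N HN].
  - exists (S N). intros [|n] Hn; [lia|]. apply HN. lia.
  - exists N. intros n Hn. apply HN. lia.
Qed.

Lemma filterlim_Cplus {T : Type} {F : (T -> Prop) -> Prop} {FF : Filter F} (u v : T -> C) a b :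
  filterlim u F (locally a) -> filterlim v F (locally b) ->
  filterlim (fun x => u x + v x) F (locally (a + b)).
Proof.
  intros Hu Hv. eapply filterlim_comp_2; [exact Hu | exact Hv |].
  apply (filterlim_plus (V := C_NormedModule)).
Qed.

Lemma filterlim_Cminus {T : Type} {F : (T -> Prop) -> Prop} {FF : Filter F} (u v : T -> C) a b :
  filterlim u F (locally a) -> filterlim v F (locally b) ->
  filterlim (fun x => u x - v x) F (locally (a - b)).
Proof.
  intros Hu Hv. apply filterlim_Cplus; [exact Hu|].
  eapply filterlim_comp; [exact Hv | apply (filterlim_opp (V := C_NormedModule))].
Qed.

Theorem pentagonal_number_theorem q E :
  (Cmod q < 1)%R -> is_series (fun j => pentagonal_pair q (S j)) E -> is_qpoch_inf q (1 + E).
Proof.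
  intros Hq HE. unfold is_qpoch_inf. apply filterlim_S_iff.
  replace (1 + E) with (1 + E - 0) by ring.
  apply (filterlim_ext (fun m => 1 + sum_n (fun j => pentagonal_pair q (S j)) m
                                 - sumC (fun k => shanks_term q (S m) (S k)) (S m))).
  { intros m. rewrite qpoch_partial_shanks, sum_n_sumC. reflexivity. }
  apply filterlim_Cminus.
  - apply filterlim_Cplus; [apply filterlim_const | exact HE].
  - apply (filterlim_S_iff (fun n => sumC (fun k => shanks_term q n (S k)) n)).
    apply shanks_tail_cvg_0, Hq.
Qed.

Lemma qpoch_inf_neq0 q P : (Cmod q < 1)%R -> is_qpoch_inf q P -> P <> 0.
Proof.
  intros Hq HP. pose proof (Cmod_range q Hq) as Hr.
  destruct (pow_lt_1_zero (Cmod q) ltac:(rewrite Rabs_pos_eq; lra) ((1 - Cmod q) / 2) ltac:(lra))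
    as [M HM].
  specialize (HM (S M) ltac:(lia)). rewrite Rabs_pos_eq in HM by (apply pow_le; lra).
  set (c := Cmod (qpoch_partial q M)).
  assert (Hc : (0 < c)%R) by (apply Cmod_gt_0, qpoch_partial_neq0, Hq).
  assert (Hlow : eventually (fun n => c / 2 <= Cmod (qpoch_partial q n))%R).
  { exists M. intros n Hn. rewrite (qpoch_partial_split q M n), Cmod_mult by exact Hn.
    pose proof (Cmod_qprod_ge q Hq M n Hn) as Htail.
    assert (Cmod q ^ S M / (1 - Cmod q) < / 2)%R.
    { apply (Rmult_lt_reg_r (1 - Cmod q)); [lra|]. field_simplify; lra. }
    fold c. nra. }
  assert (Hlim : filterlim (fun n => Cmod (qpoch_partial q n)) eventually (locally (Cmod P)))
    by (eapply filterlim_comp; [exact HP | exact (filterlim_norm (V := C_NormedModule) P)]).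
  pose proof (is_lim_seq_le_loc _ _ _ (Cmod P) Hlow (is_lim_seq_const (c / 2)) Hlim) as Hle.
  simpl in Hle. intros ->. rewrite Cmod_0 in Hle. lra.
Qed.

(** * Convergence of the series *)

Lemma ex_series_geom_dominated (a : nat -> C) (K r : R) N :
  (0 <= r < 1)%R -> (forall n, (N <= n)%nat -> (Cmod (a n) <= K * r ^ n)%R) -> ex_series a.
Proof.
  intros Hr Ha. apply (ex_series_incr_n a N).
  apply (ex_series_le (V := C_CompleteNormedModule) _ (fun k => K * r ^ N * r ^ k)%R).
  - intros k. rewrite Rmult_assoc, <- pow_add. apply Ha. lia.
  - apply (ex_series_scal_l (V := R_NormedModule)), ex_series_geom. rewrite Rabs_pos_eq; lra.
Qed.

Lemma R_exponent n : ((n * (3 * n + 1)) / 2 = (n * (3 * n - 1)) / 2 + n)%nat.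
Proof.
  replace (n * (3 * n + 1))%nat with (n * (3 * n - 1) + n * 2)%nat by nia.
  apply Nat.div_add. lia.
Qed.

Lemma pentagonal_exponent_ge n : (n <= (n * (3 * n - 1)) / 2)%nat.
Proof. destruct n as [|m]; [lia|]. rewrite pentagonal_exponent_S. lia. Qed.

Lemma Cmod_pentagonal_pair_le q n :
  (Cmod q < 1)%R -> (Cmod (pentagonal_pair q n) <= 2 * Cmod q ^ n)%R.
Proof.
  intros Hq. pose proof (Cmod_range q Hq) as Hr. unfold pentagonal_pair.
  rewrite !Cmod_mult, Cmod_m1_pow, Cmod_pow.
  pose proof (Cmod_1_plus_pow_le q n ltac:(lra)).
  pose proof (pow_antitone (Cmod q) _ _ ltac:(lra) (pentagonal_exponent_ge n)).
  pose proof (pow_le_1 (Cmod q) ((n * (3 * n - 1)) / 2) ltac:(lra)).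
  pose proof (Cmod_ge_0 (1 + q ^ n)). nra.
Qed.

Lemma ex_series_pentagonal q : (Cmod q < 1)%R -> ex_series (fun j => pentagonal_pair q (S j)).
Proof.
  intros Hq. pose proof (Cmod_range q Hq) as Hr.
  apply (ex_series_geom_dominated _ 2 (Cmod q) 0); [lra|]. intros n _.
  eapply Rle_trans; [apply Cmod_pentagonal_pair_le, Hq|].
  pose proof (pow_antitone (Cmod q) n (S n) ltac:(lra) ltac:(lia)). lra.
Qed.

Lemma Cmod_1_minus_ge_half (u x : C) : (Cmod u * Cmod x <= / 2)%R -> (/ 2 <= Cmod (1 - u * x))%R.
Proof. intros H. pose proof (Cmod_1_minus_ge (u * x)). rewrite Cmod_mult in *. lra. Qed.

Lemma Cmod_R_term_le z q n :
  (Cmod q < 1)%R -> (/ 2 <= Cmod (1 - z * q ^ n))%R -> (/ 2 <= Cmod (1 - / z * q ^ n))%R ->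
  (Cmod (R_term z q n) <= 8 * Cmod ((1 - z) * (1 - / z)) * Cmod q ^ n)%R.
Proof.
  intros Hq H1 H2. pose proof (Cmod_range q Hq) as Hr.
  set (w := (1 - z) * (1 - / z)).
  assert (Hden : (/ 4 <= Cmod ((1 - z * q ^ n) * (1 - / z * q ^ n)))%R).
  { rewrite Cmod_mult. replace (/ 4)%R with (/ 2 * / 2)%R by field. apply Rmult_le_compat; lra. }
  assert (Hden0 : (1 - z * q ^ n) * (1 - / z * q ^ n) <> 0).
  { intros H0. rewrite H0, Cmod_0 in Hden. lra. }
  unfold R_term. fold w. rewrite Cmod_div by exact Hden0.
  set (den := Cmod ((1 - z * q ^ n) * (1 - / z * q ^ n))) in *.
  rewrite !Cmod_mult, Cmod_m1_pow, Cmod_pow.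
  assert (Hinv : (/ den <= 4)%R).
  { rewrite <- (Rinv_inv 4). apply Rinv_le_contravar; lra. }
  assert (Hexp : (Cmod q ^ ((n * (3 * n + 1)) / 2) <= Cmod q ^ n)%R)
    by (apply pow_antitone; [lra | rewrite R_exponent; lia]).
  pose proof (Cmod_1_plus_pow_le q n ltac:(lra)).
  pose proof (pow_le_1 (Cmod q) ((n * (3 * n + 1)) / 2) ltac:(lra)).
  pose proof (Cmod_ge_0 w). pose proof (Cmod_ge_0 (1 + q ^ n)).
  pose proof (Rinv_0_lt_compat den ltac:(lra)).
  assert (Hnum : (Cmod w * 1 * Cmod q ^ ((n * (3 * n + 1)) / 2) * Cmod (1 + q ^ n)
                  <= Cmod w * (2 * Cmod q ^ n))%R).
  { rewrite Rmult_1_r, Rmult_assoc. apply Rmult_le_compat_l; [lra|]. nra. }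
  unfold Rdiv. apply Rle_trans with (Cmod w * (2 * Cmod q ^ n) * 4)%R; [|lra].
  apply Rmult_le_compat; [|lra|exact Hnum|exact Hinv].
  apply Rmult_le_pos; [|lra]. apply Rmult_le_pos; [|lra]. lra.
Qed.

Lemma ex_series_R_term z q : (Cmod q < 1)%R -> ex_series (fun n => R_term z q (S n)).
Proof.
  intros Hq. pose proof (Cmod_range q Hq) as Hr.
  set (K := (Cmod z + Cmod (/ z) + 1)%R).
  assert (HK : (0 < K)%R) by (unfold K; pose proof (Cmod_ge_0 z); pose proof (Cmod_ge_0 (/ z)); lra).
  destruct (pow_lt_1_zero (Cmod q) ltac:(rewrite Rabs_pos_eq; lra) (/ (2 * K)) ltac:(apply Rinv_0_lt_compat; lra))
    as [N HN].
  assert (Hsmall : forall u n, (N <= n)%nat -> (Cmod u <= K)%R -> (/ 2 <= Cmod (1 - u * q ^ n))%R).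
  { intros u n Hn Hu. apply Cmod_1_minus_ge_half. specialize (HN n Hn).
    rewrite Rabs_pos_eq in HN by (apply pow_le; lra). rewrite Cmod_pow.
    replace (/ 2)%R with (K * / (2 * K))%R by (field; lra).
    apply Rmult_le_compat; [apply Cmod_ge_0 | apply pow_le; lra | exact Hu | lra]. }
  apply (ex_series_geom_dominated _ (8 * Cmod ((1 - z) * (1 - / z))) (Cmod q) N); [lra|].
  intros n Hn. eapply Rle_trans.
  - apply Cmod_R_term_le; [exact Hq | |]; apply Hsmall; try lia;
      unfold K; pose proof (Cmod_ge_0 z); pose proof (Cmod_ge_0 (/ z)); lra.
  - pose proof (pow_antitone (Cmod q) n (S n) ltac:(lra) ltac:(lia)).
    pose proof (Cmod_ge_0 ((1 - z) * (1 - / z))). nra.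
Qed.

Lemma lhs_term_decomp (z q : C) n : z <> 0 -> z * q ^ n <> 1 -> / z * q ^ n <> 1 ->
  lhs_term z q n = (z + / z - 1) * R_term z q n + (1 - z) * (1 - / z) * pentagonal_pair q n.
Proof.
  intros Hz H1 H2. unfold lhs_term, R_term, pentagonal_pair.
  rewrite (Cpow_split q ((n * (3 * n + 1)) / 2) ((n * (3 * n - 1)) / 2) n) by apply R_exponent.
  rewrite (Cpow_split q (3 * n) n (n + n)) by lia. rewrite (Cpow_add_r q n n).
  field. repeat split; auto.
  - intros H0. apply H2. apply Ceq_minus in H0. rewrite <- H0. field. exact Hz.
  - intros H0. apply Ceq_minus in H0. auto.
Qed.

Theorem lemma4p1 (q z : C) :
  (Cmod q < 1)%R ->
  z <> 0 ->
  (forall n : nat, (1 <= n)%nat -> z * q ^ n <> 1 /\ / z * q ^ n <> 1) ->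
  exists P S1 S2 : C,
    is_qpoch_inf q P /\ P <> 0 /\
    is_series (fun n => lhs_term z q (S n)) S1 /\
    is_series (fun n => R_term z q (S n)) S2 /\
    / P * (1 + S1) =
      (z + / z - 1) * (/ P * (1 + S2)) + (1 - z) * (1 - / z).
Proof.
  intros Hq Hz Hzq.
  destruct (ex_series_pentagonal q Hq) as [E HE].
  destruct (ex_series_R_term z q Hq) as [S2 HS2].
  pose proof (pentagonal_number_theorem q E Hq HE) as HP.
  pose proof (qpoch_inf_neq0 q _ Hq HP) as HP0.
  exists (1 + E), ((z + / z - 1) * S2 + (1 - z) * (1 - / z) * E), S2.
  split; [exact HP|]. split; [exact HP0|].
  split; [|split; [exact HS2|]].
  - eapply is_series_ext;
      [|exact (is_series_plus _ _ _ _ (is_series_scal _ _ _ HS2) (is_series_scal _ _ _ HE))].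
    intros n. destruct (Hzq (S n) ltac:(lia)). rewrite lhs_term_decomp by auto. reflexivity.
  - field. split; assumption.
Qed.
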